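(* Let $\mathcal P$ be a CPOS $2n$-gon. Let $A^+$ be the area of the polygon $P_1P_2\cdots P_{n+1}$ and $A^-$ the area of the polygon $P_{n+1}P_{n+2}\cdots P_{2n}P_1$ (the two parts into which the great diagonal $P_1P_{n+1}$ divides $\mathcal P$). Then $$A^- - A^+ = 2\sum_{j=1}^n\big[v(j+\tfrac12),u_j\big].$$
   Context: A CPOS $2n$-gon ($n\ge2$) is a closed planar polygon $\mathcal P$ with vertices $P_1,\dots,P_{2n}$ (indices mod $2n$) bounding a convex region, with no two adjacent sides parallel, with $P_{i+n+1}-P_{i+n}$ parallel to $P_{i+1}-P_i$ for all $i$, and positively oriented: $[P_{i+1}-P_i,P_{j+1}-P_j]>0$ for $1\le i<j\le n$, where $[a,b]$ is the determinant of $a,b\in\mathbb R^2$. $M_i=\tfrac12(P_i+P_{i+n})$ (so $M_{n+1}=M_1$). For $1\le i\le n$ set $v(i+\tfrac12)=M_{i+1}-M_i$ and $u_i=P_i-M_i$. *)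

From HB Require Import structures.
From mathcomp Require Import all_boot all_order all_algebra.
Set Implicit Arguments. Unset Strict Implicit. Unset Printing Implicit Defensive.
Import Order.TTheory GRing.Theory Num.Theory.
Local Open Scope ring_scope.

Section Geo.
Variable R : realFieldType.

Definition pt := (R * R)%type.

(* [a,b] : the determinant of a, b *)
Definition det (a b : pt) : R := a.1 * b.2 - a.2 * b.1.
Definition vadd (a b : pt) : pt := (a.1 + b.1, a.2 + b.2).
Definition vsub (a b : pt) : pt := (a.1 - b.1, a.2 - b.2).
Definition vhalf (a : pt) : pt := (a.1 / 2, a.2 / 2).

Definition edge (P : nat -> pt) (i : nat) : pt := vsub (P i.+1) (P i).

(* CPOS 2n-gon: vertices P_1..P_{2n}, indices mod 2n (P periodic of period 2n). *)
Definition CPOS (n : nat) (P : nat -> pt) : Prop :=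
  (2 <= n)%N /\
      (forall i, P (i + 2 * n)%N = P i) /\
      (* bounds a convex region (positively traversed): every vertex lies
         on the left (closed) side of the line of every side *)
      (forall i k, 0 <= det (edge P i) (vsub (P k) (P i))) /\
      (forall i, det (edge P i) (edge P i.+1) != 0) /\
      (forall i, det (edge P (i + n)%N) (edge P i) = 0) /\
      (forall i j, (1 <= i)%N -> (i < j)%N -> (j <= n)%N ->
                   0 < det (edge P i) (edge P j)).

Definition midp (n : nat) (P : nat -> pt) (i : nat) : pt :=
  vhalf (vadd (P i) (P (i + n)%N)).
(* v(i + 1/2) = M_{i+1} - M_i *)
Definition vhalfidx (n : nat) (P : nat -> pt) (i : nat) : pt :=
  vsub (midp n P i.+1) (midp n P i).
Definition uvec (n : nat) (P : nat -> pt) (i : nat) : pt :=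
  vsub (P i) (midp n P i).

(* Area of the (simple) closed polygon with vertex list s, via the
   shoelace formula: |sum_k [Q_k, Q_{k+1}]| / 2 (indices cyclic). *)
Definition polyArea (s : seq pt) : R :=
  `| \sum_(k < size s) det (nth (0, 0) s k) (nth (0, 0) s ((k.+1) %% size s)) | / 2.

End Geo.

From HB Require Import structures.
From mathcomp Require Import all_boot all_order all_algebra.
From mathcomp Require Import ring lra.
Set Implicit Arguments. Unset Strict Implicit. Unset Printing Implicit Defensive.
Import Order.TTheory GRing.Theory Num.Theory.
Local Open Scope ring_scope.

(* Areas: for a run of consecutive vertices of a convex, positively
   traversed polygon, the shoelace sum is a sum of nonnegative fan
   triangles, so the absolute value in [polyArea] can be dropped and
   the area is half the signed shoelace sum [shoelace].
   Midpoint identity: since P_{j+n+1}-P_{j+n} is parallel to P_{j+1}-P_j,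
   4[v(j+1/2),u_j] equals the difference of the edge terms
   [P_{j+n},P_{j+n+1}] - [P_j,P_{j+1}] plus a telescoping term
   [P_j,P_{j+n}] - [P_{j+1},P_{j+n+1}].  Summing over j = 1..n and using
   2n-periodicity yields 4 Sum [v,u] = shoelace(A^-) - shoelace(A^+),
   i.e. A^- - A^+ = 2 Sum [v,u]. *)

Section Shoelace.
Variable R : realFieldType.
Implicit Types (Q : nat -> pt R) (x y z : pt R).

Definition shoelace Q (a m : nat) : R :=
  \sum_(k < m) det (Q (a + k)%N) (Q (a + k).+1) + det (Q (a + m)%N) (Q a).

Lemma shoelace_iota Q a m :
  let s := [seq Q i | i <- iota a m.+1] in
  \sum_(k < size s) det (nth (0, 0) s k) (nth (0, 0) s (k.+1 %% size s))
  = shoelace Q a m.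
Proof.
move=> s; have nth_s k : (k <= m)%N -> nth (0, 0) s k = Q (a + k)%N.
  by move=> le_km; rewrite (nth_map 0%N) ?size_iota // nth_iota.
rewrite size_map size_iota big_ord_recr /= modnn !nth_s // addn0.
congr (_ + _); apply: eq_bigr => k _; have lt_km := ltn_ord k.
by rewrite modn_small ?ltnS // !nth_s // 1?ltnW // addnS.
Qed.

Lemma det_vsub x y z : det (vsub x z) (vsub y z) = det x y + det z x - det z y.
Proof. by case: x y z => ? ? [? ?] [? ?]; rewrite /det /=; ring. Qed.

Lemma shoelace_fan Q a m :
  shoelace Q a m =
  \sum_(k < m) det (vsub (Q (a + k)%N) (Q a)) (vsub (Q (a + k).+1) (Q a)).
Proof.
rewrite /shoelace; elim: m => [|m IH].
  by rewrite addn0 !big_ord0 add0r; case: (Q a) => ? ?; rewrite /det /=; ring.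
rewrite addnS !big_ord_recr /= det_vsub -IH.
by case: (Q (a + m)%N) (Q (a + m).+1) (Q a) => ? ? [? ?] [? ?]; rewrite /det /=; ring.
Qed.

(* Each fan triangle is positively oriented when Q_a lies to the left of
   every side, so the shoelace sum of such a run is nonnegative. *)
Lemma shoelace_ge0 Q a m :
  (forall k, 0 <= det (edge Q k) (vsub (Q a) (Q k))) -> 0 <= shoelace Q a m.
Proof.
move=> left_of; rewrite shoelace_fan; apply: sumr_ge0 => k _.
have fan_as_side : det (vsub (Q (a + k)%N) (Q a)) (vsub (Q (a + k).+1) (Q a))
                  = det (edge Q (a + k)) (vsub (Q a) (Q (a + k)%N)).
  by rewrite /edge; case: (Q (a + k)%N) (Q (a + k).+1) (Q a) => ? ? [? ?] [? ?];
     rewrite /det /=; ring.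
by rewrite fan_as_side left_of.
Qed.

Lemma polyArea_convex_run Q a m :
  (forall k, 0 <= det (edge Q k) (vsub (Q a) (Q k))) ->
  polyArea [seq Q i | i <- iota a m.+1] = shoelace Q a m / 2.
Proof. by move=> left_of; rewrite /polyArea shoelace_iota ger0_norm ?shoelace_ge0. Qed.

End Shoelace.

Section Midpoints.
Variable R : realFieldType.
Variables (n : nat) (P : nat -> pt R).

Let diag_det (j : nat) : R := det (P j) (P (j + n)%N).

Lemma det_vhalfidx_uvec j :
  det (edge P (j + n)%N) (edge P j) = 0 ->
  4 * det (vhalfidx n P j) (uvec n P j) =
  det (P (j + n)%N) (P (j + n).+1) - det (P j) (P j.+1)
  + (diag_det j - diag_det j.+1).
Proof.
rewrite /diag_det /vhalfidx /uvec /midp /edge addSn.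
case: (P j) (P j.+1) (P (j + n)%N) (P (j + n).+1) => a1 a2 [b1 b2] [c1 c2] [d1 d2].
rewrite /det /vhalf /vadd /vsub /= => sides_parallel.
have half2 : (2^-1 : R) * 2 = 1 by rewrite mulVf // pnatr_eq0.
nra.
Qed.

Hypothesis periodic : forall i, P (i + 2 * n)%N = P i.
Hypothesis parallel : forall i, det (edge P (i + n)%N) (edge P i) = 0.

Lemma P_wrap : P (n.+1 + n)%N = P 1%N.
Proof. by rewrite -[RHS]periodic mul2n -addnn addSn. Qed.

(* Summing the local identity: the edge terms give the shoelace sums of the
   two halves, and the telescoping terms produce their closing terms. *)
Lemma sum_det_vhalfidx_uvec :
  4 * \sum_(1 <= j < n.+1) det (vhalfidx n P j) (uvec n P j) =
  shoelace P n.+1 n - shoelace P 1 n.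
Proof.
have upper_edges : \sum_(1 <= j < n.+1) det (P (j + n)%N) (P (j + n).+1)
                 = \sum_(k < n) det (P (n.+1 + k)%N) (P (n.+1 + k).+1).
  by rewrite big_add1 big_mkord; apply: eq_bigr => k _; rewrite addSn addnC.
have lower_edges : \sum_(1 <= j < n.+1) det (P j) (P j.+1)
                 = \sum_(k < n) det (P (1 + k)%N) (P (1 + k).+1).
  by rewrite big_add1 big_mkord.
have diagonals : \sum_(1 <= j < n.+1) (diag_det j - diag_det j.+1)
               = diag_det 1 - diag_det n.+1.
  by rewrite (telescope_sumr_eq (fun j => - diag_det j)) // => [|j _];
     rewrite opprK addrC.
rewrite mulr_sumr (eq_bigr _ (fun j _ => det_vhalfidx_uvec (parallel j))).
rewrite big_split sumrB upper_edges lower_edges diagonals /shoelace /diag_det.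
rewrite P_wrap add1n /=.
by case: (P 1%N) (P n.+1) => ? ? [? ?]; rewrite /det /=; ring.
Qed.

End Midpoints.

Theorem mainTheorem8 (R : realFieldType) (n : nat) (P : nat -> pt R) :
  CPOS n P ->
  let Aplus := polyArea [seq P i | i <- iota 1 n.+1] in
  let Aminus := polyArea ([seq P i | i <- iota n.+1 n] ++ [:: P 1%N]) in
  Aminus - Aplus = 2 * \sum_(1 <= j < n.+1) det (vhalfidx n P j) (uvec n P j).
Proof.
move=> [_ [periodic [convex [_ [parallel _]]]]] Aplus Aminus.
have lower_run : [seq P i | i <- iota n.+1 n] ++ [:: P 1%N]
               = [seq P i | i <- iota n.+1 n.+1].
  by have := iotaD n.+1 n 1; rewrite addn1 => ->; rewrite map_cat /= (P_wrap periodic).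
have sum4 := sum_det_vhalfidx_uvec periodic parallel.
rewrite /Aplus /Aminus lower_run.
rewrite (polyArea_convex_run n (convex^~ n.+1)) (polyArea_convex_run n (convex^~ 1%N)).
lra.
Qed.
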